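(* Fix $n\ge3$ and $M>0$ satisfying (A) and (B). There exists $\bar\epsilon>0$ such that: if $f:V^n\to[0,1]$ is anonymous and BIC in $\Gamma^0$, then there is a family $\{f_\epsilon\}_{\epsilon\in(0,\bar\epsilon]}$ of anonymous SCFs $f_\epsilon:V^n\to[0,1]$ such that (i) each $f_\epsilon$ is BIC in $\Gamma^\epsilon$, and (ii) $f_\epsilon(v)\to f(v)$ as $\epsilon\to0$ for every $v\in V^n$.
   Context: Fix $n\ge 3$ agents $N=\{1,\dots,n\}$, choosing between Reform $R$ (agent $i$'s utility $v_i$) and Status quo $S$ (utility $0$). Let $M>0$ satisfy (A): $\frac{2}{n}\left[-M^2+M+n-2\right]+\frac{n-2}{n}\left[2M+n-4\right]<0$, and (B): $2M-(n-2)>0$. Let $V=\{-M^2,-1,1,M\}$. For $\epsilon\in[0,1/4]$, the environment $\Gamma^\epsilon$ has independent values $\tilde v_1,\dots,\tilde v_n$ with distributions: for agents $1,2$: $\Pr(-M^2)=0.5-\epsilon$, $\Pr(-1)=\epsilon$, $\Pr(1)=\epsilon$, $\Pr(M)=0.5-\epsilon$; for agents $3,\dots,n$: $\Pr(-M^2)=\epsilon$, $\Pr(-1)=0.5-\epsilon$, $\Pr(1)=0.5-\epsilon$, $\Pr(M)=\epsilon$. An SCF is any $f:V^n\to[0,1]$, defined on all of $V^n$ (including zero-probability profiles). $f$ is anonymous if $f(v)=f(\pi v)$ for all $v\in V^n$ and permutations $\pi$ of $N$, where $\pi v=(v_{\pi(1)},\dots,v_{\pi(n)})$. $f$ is BIC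 in $\Gamma^\epsilon$ if for every agent $i$ and all reports $v_i,v_i'\in V$: $v_i\,\mathbb{E}^\epsilon(f(v_i,\tilde v_{-i}))\ge v_i\,\mathbb{E}^\epsilon(f(v_i',\tilde v_{-i}))$, expectation over $\tilde v_{-i}$ under $\Gamma^\epsilon$. *)

From HB Require Import structures.
From mathcomp Require Import all_boot all_order all_algebra fingroup perm.
From mathcomp Require Import all_classical all_reals all_analysis.
Set Implicit Arguments. Unset Strict Implicit. Unset Printing Implicit Defensive.
Import Order.TTheory GRing.Theory Num.Theory.
Local Open Scope ring_scope.

Definition val_of {R : realType} (M : R) (k : 'I_4) : R :=
  match nat_of_ord k with
  | 0 => - M ^+ 2
  | 1 => -1
  | 2 => 1
  | _ => M
  end.

(* A profile v in V^n; agent i (paper: i+1) has type v i. *)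
Definition profile (n : nat) := {ffun 'I_n -> 'I_4}.

(* Probability that agent j has type k in Gamma^eps.
   Agents 1,2 of the paper are indices 0,1. *)
Definition prob {R : realType} (n : nat) (eps : R) (j : 'I_n) (k : 'I_4) : R :=
  if (nat_of_ord j < 2)%N then
    match nat_of_ord k with
    | 0 => 2^-1 - eps | 1 => eps | 2 => eps | _ => 2^-1 - eps end
  else
    match nat_of_ord k with
    | 0 => eps | 1 => 2^-1 - eps | 2 => 2^-1 - eps | _ => eps end.

Definition interim {R : realType} (n : nat) (eps : R) (f : profile n -> R)
  (i : 'I_n) (x : 'I_4) : R :=
  \sum_(w : {ffun 'I_n -> 'I_4})
     (\prod_(j < n) (if j == i then (w j == x)%:R else prob eps j (w j))) * f w.

Definition is_SCF {R : realType} (n : nat) (f : profile n -> R) : Prop :=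
  forall v, 0 <= f v <= 1.

Definition anonymous {R : realType} (n : nat) (f : profile n -> R) : Prop :=
  forall (v : profile n) (s : {perm 'I_n}), f v = f [ffun i => v (s i)].

Definition BIC {R : realType} (n : nat) (M eps : R) (f : profile n -> R) : Prop :=
  forall (i : 'I_n) (x x' : 'I_4),
    val_of M x * interim eps f i x' <= val_of M x * interim eps f i x.

Definition condA {R : realType} (n : nat) (M : R) : Prop :=
  2 / n%:R * (- M ^+ 2 + M + n%:R - 2) + (n%:R - 2) / n%:R * (2 * M + n%:R - 4) < 0.

Definition condB {R : realType} (n : nat) (M : R) : Prop :=
  2 * M - (n%:R - 2) > 0.

(* The interim values of an anonymous SCF depend only on whether the agent is
   one of the first two or not.  Perturb [f] by an anonymous correction whose
   interim values cancel, for both groups, the change of the interim values of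
   [f] when passing from Gamma^0 to Gamma^eps: the correction
   [sum_l psi (v l) + sum_k s k * prod_j (1 + [v j = k])] has interim values
   [psi x + s x * K_i(x) + const], and [K_i(x)] differs between the groups as
   long as eps <> 1/4, so [psi] and [s] can be solved for.  Then [f] plus the
   correction has, up to an additive constant, the Gamma^0 interim values of
   [f], hence is BIC in Gamma^eps; a positive affine rescaling brings it back
   into [0,1] without affecting BIC, and everything tends to [f] as eps -> 0
   because the correction vanishes at eps = 0. *)

From mathcomp Require Import all_boot all_order all_algebra fingroup perm.
From mathcomp Require Import all_classical all_reals all_analysis.
From mathcomp Require Import ring lra.
Import Order.TTheory GRing.Theory Num.Theory numFieldNormedType.Exports.
Local Open Scope ring_scope.
Local Open Scope classical_set_scope.
Set Implicit Arguments. Unset Strict Implicit. Unset Printing Implicit Defensive.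

Section TypeDistribution.
Variables (R : realType) (n : nat).
Implicit Types (eps : R) (j : 'I_n) (k : 'I_4).

Definition head_agent j := (j < 2)%N.

Lemma probE eps j k : prob eps j k =
  if head_agent j == (val k \in [:: 0; 3])%N then 2^-1 - eps else eps.
Proof. by rewrite /prob /head_agent; case: ifP; case: k => [[|[|[|[|]]]] ?]. Qed.

Lemma prob_head_agent eps j j' k :
  head_agent j = head_agent j' -> prob eps j k = prob eps j' k.
Proof. by rewrite !probE => ->. Qed.

Lemma sum_prob eps j : \sum_k prob eps j k = 1.
Proof.
rewrite !big_ord_recr big_ord0 /= !probE.
by case: head_agent => /=; field.
Qed.

Lemma prob_ge0 eps j k : 0 <= eps <= 2^-1 -> 0 <= prob eps j k.
Proof. by rewrite probE; case: ifP => _ /andP[]; lra. Qed.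

Lemma prob_continuous j k : continuous (fun eps => prob eps j k).
Proof.
under eq_fun do rewrite probE.
case: (_ == _) => eps; last exact: cvg_id.
by apply: cvgB; [exact: cvg_cst | exact: cvg_id].
Qed.

Lemma prob_head_neq eps j j' k : head_agent j -> ~~ head_agent j' ->
  eps != 4^-1 -> prob eps j k != prob eps j' k.
Proof.
move=> hj /negbTE hj' heps; rewrite !probE hj hj'.
by case: (_ \in _) => /=; apply: contra heps => /eqP ?; apply/eqP; lra.
Qed.

End TypeDistribution.

Section Interim.
Variables (R : realType) (n : nat).
Implicit Types (eps c : R) (f g : profile n -> R) (i j : 'I_n) (x k : 'I_4).

Lemma eq_interim eps f g i x : f =1 g -> interim eps f i x = interim eps g i x.
Proof. by move=> fg; apply: eq_bigr => w _; rewrite fg. Qed.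

Lemma interimD eps f g i x :
  interim eps (fun w => f w + g w) i x = interim eps f i x + interim eps g i x.
Proof. by rewrite /interim -big_split; apply: eq_bigr => w _; rewrite mulrDr. Qed.

Lemma interimZ eps c f i x :
  interim eps (fun w => c * f w) i x = c * interim eps f i x.
Proof. by rewrite /interim mulr_sumr; apply: eq_bigr => w _; rewrite mulrCA. Qed.

Lemma interim_sum eps (I : finType) (F : I -> profile n -> R) i x :
  interim eps (fun w => \sum_l F l w) i x = \sum_l interim eps (F l) i x.
Proof. by rewrite /interim; under eq_bigr do rewrite mulr_sumr; exact: exchange_big. Qed.

Lemma interim_prod eps (phi : 'I_n -> 'I_4 -> R) i x :
  interim eps (fun w => \prod_j phi j (w j)) i x =
  \prod_j (if j == i then phi j x else \sum_k prob eps j k * phi j k).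
Proof.
pose q j k := (if j == i then (k == x)%:R else prob eps j k) * phi j k.
rewrite /interim (eq_bigr (fun w : profile n => \prod_j q j (w j))); last first.
  by move=> w _; rewrite big_split.
rewrite -(bigA_distr_bigA q); apply: eq_bigr => j _; rewrite /q.
case: eqP => _ //; rewrite (bigD1 x) //= eqxx mul1r big1 ?addr0 // => k /negPf->.
by rewrite mul0r.
Qed.

Lemma interim_coord eps (phi : 'I_4 -> R) l i x :
  interim eps (fun w => phi (w l)) i x =
  if l == i then phi x else \sum_k prob eps l k * phi k.
Proof.
pose psi j k := if j == l then phi k else 1.
rewrite (@eq_interim _ _ (fun w => \prod_j psi j (w j))); last first.
  by move=> w; rewrite (bigD1 l) //= /psi eqxx big1 ?mulr1 // => j /negPf->.
rewrite interim_prod (bigD1 l) //= [X in _ * X]big1 ?mulr1 => [|j /negPf jl].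
  by rewrite /psi eqxx.
rewrite /psi jl; case: eqP => // _.
by under eq_bigr do rewrite mulr1; exact: sum_prob.
Qed.

Lemma interim_cst eps c i x : interim eps (fun=> c) i x = c.
Proof. by have := interim_coord eps (fun=> c) i i x; rewrite eqxx. Qed.

Lemma interim_anonymous eps f i i' x : anonymous f ->
  head_agent i = head_agent i' -> interim eps f i x = interim eps f i' x.
Proof.
move=> anon_f hii'; set s := tperm i i'.
have sK j : s (s j) = j by rewrite tpermK.
have s_eqi j : (s j == i) = (j == i').
  by rewrite -[X in s j == X](tpermR i i') (inj_eq perm_inj).
rewrite /interim (reindex_inj (h := fun w : profile n => [ffun j => w (s j)])) /=;
  last first.
  by move=> w1 w2 /ffunP w12; apply/ffunP => j; have := w12 (s j); rewrite !ffunE sK.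
apply: eq_bigr => w _; rewrite -anon_f; congr (_ * _).
rewrite (reindex_inj (@perm_inj _ s)) /=; apply: eq_bigr => j _.
rewrite ffunE sK s_eqi; case: eqP => // _; apply: prob_head_agent.
by rewrite /s; case: tpermP => [->|->|].
Qed.

Lemma interim_continuous f i x : continuous (fun eps => interim eps f i x).
Proof.
apply: continuous_big => [|w _]; first exact: add_continuous.
move=> eps; apply: cvgM; last exact: cvg_cst.
apply: continuous_big => [|j _]; first exact: mul_continuous.
by case: eqP => _; [move=> ?; exact: cvg_cst | exact: prob_continuous].
Qed.

End Interim.

Section Correction.
Variables (R : realType) (n : nat).
Implicit Types (eps : R) (i j : 'I_n) (x k : 'I_4) (psi s : 'I_4 -> R).

(* The expectation of 2 ^ #{j != i | w j = k} in Gamma^eps. *)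
Definition count_mgf eps i k : R := \prod_(j | j != i) (1 + prob eps j k).

Lemma count_mgf_gt0 eps i k : 0 <= eps <= 2^-1 -> 0 < count_mgf eps i k.
Proof.
by move=> heps; apply: prodr_gt0 => j _; apply: ltr_wpDr (prob_ge0 j k heps) _.
Qed.

Lemma count_mgf_head_neq eps i i' k : head_agent i -> ~~ head_agent i' ->
  0 <= eps <= 2^-1 -> eps != 4^-1 -> count_mgf eps i k != count_mgf eps i' k.
Proof.
move=> hi hi' heps heps4; apply: contra (prob_head_neq k hi hi' heps4) => /eqP Kii'.
have Kprod j : \prod_(j0 < n) (1 + prob eps j0 k) = (1 + prob eps j k) * count_mgf eps j k.
  by rewrite (bigD1 j).
have := Kprod i; rewrite (Kprod i') Kii' => /mulIf; rewrite gt_eqF ?count_mgf_gt0 //.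
by move=> /(_ isT) /addrI ->.
Qed.

Lemma count_mgf_continuous i k : continuous (fun eps => count_mgf eps i k).
Proof.
apply: continuous_big => [|j _]; first exact: mul_continuous.
by move=> eps; apply: cvgD; [exact: cvg_cst | exact: prob_continuous].
Qed.

(* Up to a constant, the first sum shifts the interim value at report [x] by
   [psi x] and the second by [s x * count_mgf eps i x]; since the latter depends
   on the group of [i], the two groups can be corrected independently. *)
Definition correction psi s (w : profile n) : R :=
  \sum_l psi (w l) + \sum_k s k * \prod_j (1 + (w j == k)%:R).

Lemma correction_anonymous psi s : anonymous (correction psi s).
Proof.
move=> v p; rewrite /correction; congr (_ + _).
  by rewrite (reindex_inj (@perm_inj _ p)); apply: eq_bigr => l _; rewrite ffunE.
apply: eq_bigr => k _; rewrite (reindex_inj (@perm_inj _ p)).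
by congr (_ * _); apply: eq_bigr => j _; rewrite ffunE.
Qed.

Lemma interim_correction eps psi s i : exists C, forall x,
  interim eps (correction psi s) i x = psi x + s x * count_mgf eps i x + C.
Proof.
exists (\sum_(l | l != i) \sum_k prob eps l k * psi k +
        \sum_k s k * count_mgf eps i k) => x.
have interim_pow2 k :
    interim eps (fun w => s k * \prod_j (1 + (w j == k)%:R)) i x =
    s k * ((1 + (x == k)%:R) * count_mgf eps i k).
  rewrite interimZ (interim_prod _ (fun _ k' => 1 + (k' == k)%:R)) (bigD1 i) //= eqxx.
  congr (_ * (_ * _)).
  apply: eq_bigr => j /negPf ->; under eq_bigr do rewrite mulrDr mulr1.
  rewrite big_split /= sum_prob (bigD1 k) //= eqxx mulr1 big1 ?addr0 //.
  by move=> k' /negPf ->; rewrite mulr0.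
rewrite interimD !interim_sum; under eq_bigr do rewrite interim_coord.
under [X in _ + X]eq_bigr do rewrite interim_pow2.
rewrite (bigD1 i) //= eqxx [X in _ + X](bigD1 x) //= eqxx addrA.
under eq_bigr => l /negPf -> do [].
under [X in _ + X = _]eq_bigr => k.
  by rewrite eq_sym => /negPf ->; rewrite addr0 mul1r; over.
by rewrite [in RHS](bigD1 x) //=; ring.
Qed.

End Correction.

Section AffineTransform.
Variables (R : realType) (n : nat).
Implicit Types (M eps : R) (f g : profile n -> R).

Lemma BIC_interim_affine M eps eps' f g :
  (forall i, exists j (c C : R), 0 <= c /\
     forall x, interim eps g i x = c * interim eps' f j x + C) ->
  BIC M eps' f -> BIC M eps g.
Proof.
move=> g_aff f_bic i x x'; have [j [c [C [c_ge0 gE]]]] := g_aff i.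
rewrite !gE !mulrDr lerD2r mulrCA [X in _ <= X]mulrCA.
exact: ler_wpM2l (f_bic j x x').
Qed.

Lemma SCF_squeeze f (c : profile n -> R) (B : R) :
  is_SCF f -> (forall w, `|c w| <= B) ->
  is_SCF (fun w => (f w + c w + B) / (1 + 2 * B)).
Proof.
move=> f_scf cB w; have /andP[f0 f1] := f_scf w.
have /ler_normlP[cB1 cB2] := cB w; have B0 : 0 <= B := le_trans (normr_ge0 _) (cB w).
have B1 : 0 < 1 + 2 * B by lra.
by rewrite divr_ge0 ?ler_pdivrMr ?mul1r /=; lra.
Qed.

End AffineTransform.

Section Perturbation.
Variables (R : realType) (n : nat) (a b : 'I_n) (f : profile n -> R).
Hypotheses (head_a : head_agent a) (nhead_b : ~~ head_agent b).
Implicit Types (eps : R) (i : 'I_n) (x : 'I_4) (w : profile n).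

Definition drift eps i x := interim 0 f i x - interim eps f i x.

(* [perturbation_shift] and [perturbation_slope] solve the linear system
   [shift x + slope x * count_mgf eps i x = drift eps i x] for [i = a, b]. *)
Definition perturbation_slope eps x :=
  (drift eps b x - drift eps a x) / (count_mgf eps b x - count_mgf eps a x).

Definition perturbation_shift eps x := drift eps a x - perturbation_slope eps x * count_mgf eps a x.

Definition perturbation eps : profile n -> R := correction (perturbation_shift eps) (perturbation_slope eps).

Definition perturbation_bound eps := \sum_w `|perturbation eps w|.

Lemma perturbation_bound_ge0 eps : 0 <= perturbation_bound eps.
Proof. exact: sumr_ge0. Qed.

Definition perturbed eps w :=
  (f w + perturbation eps w + perturbation_bound eps) / (1 + 2 * perturbation_bound eps).

Definition representative i := if head_agent i then a else b.

Lemma head_agent_representative i : head_agent (representative i) = head_agent i.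
Proof. by rewrite /representative; case: ifP => // _; exact/negbTE. Qed.

Lemma count_mgf_ab_neq eps x : 0 <= eps <= 2^-1 -> eps != 4^-1 ->
  count_mgf eps b x - count_mgf eps a x != 0.
Proof.
by move=> heps heps4; rewrite subr_eq0 eq_sym count_mgf_head_neq.
Qed.

Lemma perturbation_shift_slope eps i x : 0 <= eps <= 2^-1 -> eps != 4^-1 ->
  perturbation_shift eps x + perturbation_slope eps x * count_mgf eps (representative i) x =
  drift eps (representative i) x.
Proof.
move=> heps heps4; have := count_mgf_ab_neq x heps heps4.
rewrite /representative /perturbation_shift /perturbation_slope; case: ifP => _ Kab; first ring.
by field.
Qed.

Lemma interim_add_perturbation eps i : 0 <= eps <= 2^-1 -> eps != 4^-1 ->
  exists C, forall x,
    interim eps (fun w => f w + perturbation eps w) (representative i) x =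
    interim 0 f (representative i) x + C.
Proof.
move=> heps heps4.
have [C corrE] := interim_correction eps (perturbation_shift eps) (perturbation_slope eps) (representative i).
exists C => x; rewrite interimD corrE perturbation_shift_slope // /drift; ring.
Qed.

Lemma perturbed_SCF eps : is_SCF f -> is_SCF (perturbed eps).
Proof.
move=> f_scf; apply: SCF_squeeze => // w.
by rewrite /perturbation_bound (bigD1 w) //= lerDl sumr_ge0.
Qed.

Lemma perturbed_anonymous eps : anonymous f -> anonymous (perturbed eps).
Proof. by move=> f_anon v p; rewrite /perturbed -f_anon /perturbation -correction_anonymous. Qed.

Lemma perturbed_BIC M eps : 0 <= eps <= 2^-1 -> eps != 4^-1 ->
  anonymous f -> BIC M 0 f -> BIC M eps (perturbed eps).
Proof.
move=> heps heps4 f_anon; apply: BIC_interim_affine => i.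
have := perturbation_bound_ge0 eps; set B := perturbation_bound eps => B_ge0.
have [C E] := interim_add_perturbation i heps heps4.
exists (representative i), (1 + 2 * B)^-1, ((1 + 2 * B)^-1 * C + B / (1 + 2 * B)).
split=> [|x]; first by rewrite invr_ge0; lra.
rewrite (interim_anonymous eps x (perturbed_anonymous eps f_anon)
           (esym (head_agent_representative i))).
rewrite (@eq_interim _ _ _ _ (fun w => (1 + 2 * B)^-1 * (f w + perturbation eps w)
                                   + B / (1 + 2 * B))); last first.
  by move=> w; rewrite /perturbed -/B; ring.
by rewrite interimD interimZ interim_cst E; ring.
Qed.

Lemma perturbed0 : perturbed 0 =1 f.
Proof.
have slope0 x : perturbation_slope 0 x = 0 by rewrite /perturbation_slope /drift !subrr mul0r.
have shift0 x : perturbation_shift 0 x = 0 by rewrite /perturbation_shift slope0 /drift subrr mul0r subr0.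
have corr0 w : perturbation 0 w = 0.
  by rewrite /perturbation /correction !big1 ?addr0 // => k _; rewrite ?slope0 ?shift0 ?mul0r.
have bound0 : perturbation_bound 0 = 0 by rewrite /perturbation_bound big1 // => w _; rewrite corr0 normr0.
by move=> w; rewrite /perturbed corr0 bound0 !addr0 mulr0 addr0 divr1.
Qed.

Lemma perturbed_continuous0 w : {for 0, continuous (perturbed ^~ w)}.
Proof.
have eps0_ge0 : 0 <= (0 : R) <= 2^-1 by lra.
have eps0_neq : 0 != 4^-1 :> R by rewrite eq_sym invr_neq0.
have drift_cont i x : continuous (fun eps => drift eps i x).
  by move=> eps; apply: cvgB; [exact: cvg_cst | exact: interim_continuous].
have slope_cont x : {for 0, continuous (perturbation_slope ^~ x)}.
  rewrite /perturbation_slope; apply: cvgM; first by apply: cvgB; exact: drift_cont.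
  apply: cvgV; first exact: count_mgf_ab_neq.
  by apply: cvgB; exact: count_mgf_continuous.
have shift_cont x : {for 0, continuous (perturbation_shift ^~ x)}.
  rewrite /perturbation_shift; apply: cvgB; first exact: drift_cont.
  by apply: cvgM; [exact: slope_cont | exact: count_mgf_continuous].
have perturbation_cont v : {for 0, continuous (perturbation ^~ v)}.
  rewrite /perturbation /correction; apply: cvgD.
    by apply: cvg_big => [|l _]; [exact: add_continuous | exact: shift_cont].
  apply: cvg_big => [|k _]; first exact: add_continuous.
  by apply: cvgM; [exact: slope_cont | exact: cvg_cst].
have bound_cont : {for 0, continuous perturbation_bound}.
  apply: cvg_big => [|v _]; first exact: add_continuous.
  by apply: cvg_norm; exact: perturbation_cont.
rewrite /perturbed; apply: cvgM.
  by apply: cvgD; [apply: cvgD; [exact: cvg_cst | exact: perturbation_cont] | exact: bound_cont].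
apply: cvgV; first by apply: lt0r_neq0; have := perturbation_bound_ge0 0; lra.
by apply: cvgD; [exact: cvg_cst | apply: cvgM; [exact: cvg_cst | exact: bound_cont]].
Qed.

End Perturbation.

Theorem lemma6 (R : realType) (n : nat) (M : R) :
  (3 <= n)%N -> 0 < M -> condA n M -> condB n M ->
  exists ebar : R, 0 < ebar /\
    forall f : profile n -> R,
      is_SCF f -> anonymous f -> BIC M 0 f ->
      exists F : R -> profile n -> R,
        (forall eps : R, 0 < eps <= ebar ->
           is_SCF (F eps) /\ anonymous (F eps) /\ BIC M eps (F eps)) /\
        (forall v : profile n, (fun eps : R => F eps v) @ (0:R)^'+ --> f v).
Proof.
move=> n_ge3 _ _ _.
pose a := Ordinal (leq_trans (isT : 0 < 3)%N n_ge3); pose b := Ordinal n_ge3.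
have head_a : head_agent a by [].
have nhead_b : ~~ head_agent b by [].
exists 8^-1; split=> [|f f_scf f_anon f_bic]; first by rewrite invr_gt0.
exists (perturbed a b f); split=> [eps /andP[eps_gt0 eps_le] | v].
  have heps : 0 <= eps <= 2^-1 by apply/andP; split; lra.
  have heps4 : eps != 4^-1 by rewrite lt_eqF //; lra.
  split; first exact: perturbed_SCF.
  by split; [exact: perturbed_anonymous | exact: perturbed_BIC].
apply: cvg_at_right_filter; rewrite -[f v](perturbed0 a b f).
exact: perturbed_continuous0.
Qed.
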